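(* A quiver $P$ is epi-projective in $\mathbf{Quiv}$ if and only if $P\cong I(S)\amalg M(T)$ for some sets $S$ and $T$.
   Context: A quiver is a quadruple $(V,E,\sigma,\tau)$ with $V,E$ sets and $\sigma,\tau : E \to V$ functions (source and target). A quiver homomorphism is a pair of functions on vertices and edges commuting with sources and targets; $\mathbf{Quiv}$ is the category of quivers and these homomorphisms, composed componentwise. A homomorphism is an epimorphism in $\mathbf{Quiv}$ iff both its vertex and edge maps are surjective. A quiver $P$ is epi-projective if for every epimorphism $\phi : G\to H$ and every homomorphism $\psi : P\to H$ there exists $\gamma : P\to G$ with $\phi\circ\gamma=\psi$. For a set $S$, $I(S)$ is the quiver with vertex set $S$ and no edges; $M(T)$ is the quiver with vertex set $\{0,1\}\times T$, edge set $T$, source $t\mapsto(0,t)$ and target $t\mapsto(1,t)$. $\amalg$ denotes disjoint union of quivers (disjoint union of vertex sets and of edge sets, with the induced source and target maps). *)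

Record quiver := Quiver {
  qV : Type;
  qE : Type;
  qsrc : qE -> qV;
  qtgt : qE -> qV
}.

Record qhom (G H : quiver) := QHom {
  hV : qV G -> qV H;
  hE : qE G -> qE H;
  hsrc : forall e, hV (qsrc G e) = qsrc H (hE e);
  htgt : forall e, hV (qtgt G e) = qtgt H (hE e)
}.
Arguments hV {G H} _ _.
Arguments hE {G H} _ _.

Definition qid (G : quiver) : qhom G G :=
  QHom G G (fun v => v) (fun e => e) (fun e => eq_refl) (fun e => eq_refl).

Definition qcomp {G H K : quiver} (g : qhom H K) (f : qhom G H) : qhom G K.
Proof.
  refine (QHom G K (fun v => hV g (hV f v)) (fun e => hE g (hE f e)) _ _).
  - intro e. rewrite (hsrc _ _ f e). apply (hsrc _ _ g).
  - intro e. rewrite (htgt _ _ f e). apply (htgt _ _ g).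
Defined.

Definition epimorphism {G H : quiver} (phi : qhom G H) : Prop :=
  forall (K : quiver) (g h : qhom H K), qcomp g phi = qcomp h phi -> g = h.

Definition epi_projective (P : quiver) : Prop :=
  forall (G H : quiver) (phi : qhom G H) (psi : qhom P H),
    epimorphism phi -> exists gamma : qhom P G, qcomp phi gamma = psi.

Definition quiver_iso (P Q : quiver) : Prop :=
  exists (f : qhom P Q) (g : qhom Q P), qcomp g f = qid P /\ qcomp f g = qid Q.

Definition Iq (S : Type) : quiver :=
  Quiver S Empty_set (fun e => match e with end) (fun e => match e with end).

(* M(T): vertices {0,1} x T (0 = false, 1 = true), edges T, t : (0,t) -> (1,t). *)
Definition Mq (T : Type) : quiver :=
  Quiver (bool * T) T (fun t => (false, t)) (fun t => (true, t)).

Definition qsum (A B : quiver) : quiver :=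
  Quiver (qV A + qV B) (qE A + qE B)
    (fun e => match e with inl a => inl (qsrc A a) | inr b => inr (qsrc B b) end)
    (fun e => match e with inl a => inl (qtgt A a) | inr b => inr (qtgt B b) end).

(* Epimorphisms of quivers are the componentwise surjections, so in I(S) ⊔ M(T)
   the isolated vertices and the free-standing edges can be lifted along an
   epimorphism independently of each other.  Conversely, every quiver P is a
   quotient of its free cover I(V) ⊔ M(E), in which each edge has private
   endpoints.  A section gamma of the cover must send each edge to its own copy,
   hence each endpoint of e to the matching endpoint of that copy; so every vertex
   is either sent by gamma to its own isolated copy, or is the source or target of
   exactly one edge and of nothing else.  This splits P as I(S) ⊔ M(E), with S the
   vertices of the first kind. *)

From Stdlib Require Import FunctionalExtensionality PropExtensionality ProofIrrelevance IndefiniteDescription.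

Lemma qhom_ext {G H : quiver} (f g : qhom G H) :
  (forall v, hV f v = hV g v) -> (forall e, hE f e = hE g e) -> f = g.
Proof.
  destruct f as [fv fe fs ft], g as [gv ge gs gt]; simpl; intros HV HE.
  assert (fv = gv) by (apply functional_extensionality; auto).
  assert (fe = ge) by (apply functional_extensionality; auto).
  subst. f_equal; apply proof_irrelevance.
Qed.

Lemma surjective_epimorphism {G H : quiver} (phi : qhom G H) :
  (forall v, exists x, hV phi x = v) -> (forall e, exists x, hE phi x = e) ->
  epimorphism phi.
Proof.
  intros surjV surjE K g h Hgh. apply qhom_ext.
  - intro v. destruct (surjV v) as [x <-].
    change (hV (qcomp g phi) x = hV (qcomp h phi) x). now rewrite Hgh.
  - intro e. destruct (surjE e) as [x <-].
    change (hE (qcomp g phi) x = hE (qcomp h phi) x). now rewrite Hgh.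
Qed.

(* Test against a quiver whose vertices are propositions: the constant map [True]
   and the image predicate of [phi] agree after composing with [phi]. *)
Lemma epimorphism_surjective_vertices {G H : quiver} (phi : qhom G H) :
  epimorphism phi -> forall v, exists x, hV phi x = v.
Proof.
  intros Hepi v.
  pose (K := Quiver Prop (Prop * Prop) fst snd).
  pose (img := fun w => exists x, hV phi x = w).
  pose (top := QHom H K (fun _ => True) (fun _ => (True, True))
                 (fun _ => eq_refl) (fun _ => eq_refl)).
  pose (ind := QHom H K img (fun e => (img (qsrc H e), img (qtgt H e)))
                 (fun _ => eq_refl) (fun _ => eq_refl)).
  assert (Htop : top = ind).
  { apply Hepi, qhom_ext; simpl.
    - intro x. apply propositional_extensionality. split; [now exists x | easy].
    - intro x. f_equal; apply propositional_extensionality; split; try easy; intros _.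
      + exists (qsrc G x). apply hsrc.
      + exists (qtgt G x). apply htgt. }
  assert (Hv : hV top v = hV ind v) by now rewrite Htop.
  simpl in Hv. change (img v). now rewrite <- Hv.
Qed.

Lemma epimorphism_surjective_edges {G H : quiver} (phi : qhom G H) :
  epimorphism phi -> forall e, exists x, hE phi x = e.
Proof.
  intros Hepi e.
  pose (K := Quiver unit Prop (fun _ => tt) (fun _ => tt)).
  pose (img := fun w => exists x, hE phi x = w).
  pose (top := QHom H K (fun _ => tt) (fun _ => True) (fun _ => eq_refl) (fun _ => eq_refl)).
  pose (ind := QHom H K (fun _ => tt) img (fun _ => eq_refl) (fun _ => eq_refl)).
  assert (Htop : top = ind).
  { apply Hepi, qhom_ext; simpl; [easy |].
    intro x. apply propositional_extensionality. split; [now exists x | easy]. }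
  assert (He : hE top e = hE ind e) by now rewrite Htop.
  simpl in He. change (img e). now rewrite <- He.
Qed.

Lemma epi_projective_iso (P Q : quiver) :
  quiver_iso P Q -> epi_projective Q -> epi_projective P.
Proof.
  intros [f [g [Hgf _]]] HQ G H phi psi Hepi.
  destruct (HQ G H phi (qcomp psi g) Hepi) as [gam Hgam].
  exists (qcomp gam f). apply qhom_ext.
  - intro v.
    change (hV (qcomp phi gam) (hV f v) = hV psi v). rewrite Hgam. simpl.
    change (hV psi (hV (qcomp g f) v) = hV psi v). now rewrite Hgf.
  - intro e.
    change (hE (qcomp phi gam) (hE f e) = hE psi e). rewrite Hgam. simpl.
    change (hE psi (hE (qcomp g f) e) = hE psi e). now rewrite Hgf.
Qed.

Lemma epi_projective_Iq_Mq (S T : Type) : epi_projective (qsum (Iq S) (Mq T)).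
Proof.
  intros G H phi psi Hepi.
  destruct (functional_choice _ (epimorphism_surjective_vertices phi Hepi))
    as [secV HsecV].
  destruct (functional_choice _ (epimorphism_surjective_edges phi Hepi))
    as [secE HsecE].
  set (Q := qsum (Iq S) (Mq T)).
  pose (liftV := fun x : qV Q => match x with
      | inl s => secV (hV psi (inl s))
      | inr (b, t) => let e := secE (hE psi (inr t)) in if b then qtgt G e else qsrc G e
      end).
  pose (liftE' := fun x : qE Q => match x with inl z => match z with end | inr t => secE (hE psi (inr t)) end).
  assert (Hsrc : forall e, liftV (qsrc Q e) = qsrc G (liftE' e)) by (intros [[]|t]; reflexivity).
  assert (Htgt : forall e, liftV (qtgt Q e) = qtgt G (liftE' e)) by (intros [[]|t]; reflexivity).
  exists (QHom Q G liftV liftE' Hsrc Htgt).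
  apply qhom_ext; simpl.
  - intros [s|[[|] t]]; simpl.
    + apply HsecV.
    + rewrite (htgt _ _ phi), HsecE. exact (eq_sym (htgt _ _ psi (inr t))).
    + rewrite (hsrc _ _ phi), HsecE. exact (eq_sym (hsrc _ _ psi (inr t))).
  - intros [[]|t]. apply HsecE.
Qed.

Section FreeCover.

Variable P : quiver.

Definition cover : quiver := qsum (Iq (qV P)) (Mq (qE P)).

Definition cover_vertex (x : qV cover) : qV P :=
  match x with inl v => v | inr (b, e) => if b then qtgt P e else qsrc P e end.

Definition cover_edge (x : qE cover) : qE P :=
  match x with inl z => match z with end | inr e => e end.

Definition cover_map : qhom cover P.
Proof.
  refine (QHom cover P cover_vertex cover_edge _ _); intros [[]|e]; reflexivity.
Defined.

Lemma cover_map_epi : epimorphism cover_map.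
Proof.
  apply surjective_epimorphism.
  - intro v. now exists (inl v).
  - intro e. now exists (inr e).
Qed.

Section CoverSection.

Variable gam : qhom P cover.
Hypothesis gam_section : qcomp cover_map gam = qid P.

Lemma cover_vertex_section v : cover_vertex (hV gam v) = v.
Proof.
  change (hV (qcomp cover_map gam) v = hV (qid P) v). now rewrite gam_section.
Qed.

Lemma section_edge e : hE gam e = inr e.
Proof.
  assert (He : hE (qcomp cover_map gam) e = hE (qid P) e) by now rewrite gam_section.
  simpl in He. destruct (hE gam e) as [[]|e']. simpl in He. now subst.
Qed.

Lemma section_src e : hV gam (qsrc P e) = inr (false, e).
Proof. now rewrite (hsrc _ _ gam), section_edge. Qed.

Lemma section_tgt e : hV gam (qtgt P e) = inr (true, e).
Proof. now rewrite (htgt _ _ gam), section_edge. Qed.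

Definition isolated : Type := {v : qV P | hV gam v = inl v}.

Lemma section_vertex_cases v :
  (hV gam v = inl v) + {p : bool * qE P | hV gam v = inr p}.
Proof.
  pose proof (cover_vertex_section v) as Hv.
  destruct (hV gam v) as [u|p] eqn:E.
  - left. simpl in Hv. now subst.
  - right. now exists p.
Defined.

Definition split_quiver : quiver := qsum (Iq isolated) (Mq (qE P)).

Definition split_vertex (v : qV P) : qV split_quiver :=
  match section_vertex_cases v with
  | inl H => inl (exist _ v H)
  | inr (exist _ p _) => inr p
  end.

Lemma split_vertex_section v b e :
  hV gam v = inr (b, e) -> split_vertex v = inr (b, e).
Proof.
  intro Hv. unfold split_vertex.
  destruct (section_vertex_cases v) as [H|[p H]]; congruence.
Qed.

Definition split_map : qhom split_quiver P.
Proof.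
  refine (QHom split_quiver P
    (fun x => match x with inl s => proj1_sig s | inr p => cover_vertex (inr p) end)
    cover_edge _ _); intros [[]|e]; reflexivity.
Defined.

Definition unsplit_map : qhom P split_quiver.
Proof.
  refine (QHom P split_quiver split_vertex (fun e => inr e) _ _); intro e.
  - exact (split_vertex_section _ _ _ (section_src e)).
  - exact (split_vertex_section _ _ _ (section_tgt e)).
Defined.

Lemma cover_section_iso : quiver_iso P split_quiver.
Proof.
  exists unsplit_map, split_map. split; apply qhom_ext; simpl; try reflexivity.
  - intro v. unfold split_vertex.
    destruct (section_vertex_cases v) as [H|[p H]]; [reflexivity |].
    transitivity (cover_vertex (hV gam v)); [now rewrite H; destruct p | apply cover_vertex_section].
  - intros [[u Hu]|[[|] e]]; simpl.
    + unfold split_vertex. destruct (section_vertex_cases u) as [H|[p H]].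
      * do 2 f_equal. apply proof_irrelevance.
      * congruence.
    + exact (split_vertex_section _ _ _ (section_tgt e)).
    + exact (split_vertex_section _ _ _ (section_src e)).
  - now intros [[]|e].
Qed.

End CoverSection.

End FreeCover.

Theorem mainTheorem6 (P : quiver) :
  epi_projective P <-> exists (S T : Type), quiver_iso P (qsum (Iq S) (Mq T)).
Proof.
  split.
  - intro HP.
    destruct (HP (cover P) P (cover_map P) (qid P) (cover_map_epi P)) as [gam Hgam].
    exists (isolated P gam), (qE P). exact (cover_section_iso P gam Hgam).
  - intros [S [T Hiso]]. exact (epi_projective_iso _ _ Hiso (epi_projective_Iq_Mq S T)).
Qed.
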